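(* Let $E$ be a graph satisfying Condition (K). Let $v\in E^0$ support at least two distinct return paths. Then the Cuntz Splice $E_C^v$ satisfies Condition (K).
   Context: A graph $E=(E^0,E^1,r,s)$ consists of countable sets $E^0$ (vertices) and $E^1$ (edges) and maps $r,s\colon E^1\to E^0$ (range and source). A path is a finite sequence $\mu=e_1\cdots e_n$ ($n\ge1$) of edges with $r(e_i)=s(e_{i+1})$; set $s(\mu)=s(e_1)$, $r(\mu)=r(e_n)$. A return path is a path $\mu=e_1\cdots e_n$ with $s(\mu)=r(\mu)$ and $r(e_i)\neq r(\mu)$ for $i<n$; a vertex $w$ supports $\mu$ if $s(\mu)=w$. $E$ satisfies Condition (K) if no vertex supports precisely one return path. The Cuntz Splice $E_C^v$ of $E$ at a vertex $v$ supporting at least two distinct return paths is the graph with vertex set $E^0\sqcup\{u_1,u_2\}$ and edge set $E^1\sqcup\{f_1,f_2,h_1,h_2,k_1,k_2\}$, where old edges keep their range and source, and $f_1\colon v\to u_1$, $f_2\colon u_1\to v$, $h_1\colon u_1\to u_1$, $h_2\colon u_1\to u_2$, $k_1\colon u_2\to u_1$, $k_2\colon u_2\to u_2$ (notation $e\colon a\to b$ means $s(e)=a$, $r(e)=b$). *)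

From Stdlib Require List.
From mathcomp Require Import all_boot.
Set Implicit Arguments. Unset Strict Implicit. Unset Printing Implicit Defensive.

Section Graphs.
Variables (V E : Type) (r s : E -> V).

Fixpoint composable (p : seq E) : Prop :=
  match p with
  | e :: ((e' :: _) as t) => r e = s e' /\ composable t
  | _ => True
  end.

Definition is_path (p : seq E) : Prop := p <> [::] /\ composable p.

Definition return_path_at (w : V) (p : seq E) : Prop :=
  is_path p /\
  (match p with e :: _ => s e = w | [::] => False end) /\
  exists (q : seq E) (e : E),
    p = rcons q e /\ r e = w /\ (forall x, List.In x q -> r x <> w).

Definition condition_K : Prop :=
  forall w : V, ~ (exists p, return_path_at w p /\
                         forall q, return_path_at w q -> q = p).

Definition two_return_paths (w : V) : Prop :=
  exists p q, return_path_at w p /\ return_path_at w q /\ p <> q.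

End Graphs.

Inductive splice_edge := f1 | f2 | h1 | h2 | k1 | k2.

Section Splice.
Variables (V E : Type) (r s : E -> V) (v : V).

Definition u1 : V + bool := inr false.
Definition u2 : V + bool := inr true.

Definition splice_s (e : E + splice_edge) : V + bool :=
  match e with
  | inl e => inl (s e)
  | inr f1 => inl v
  | inr f2 => u1
  | inr h1 => u1
  | inr h2 => u1
  | inr k1 => u2
  | inr k2 => u2
  end.

Definition splice_r (e : E + splice_edge) : V + bool :=
  match e with
  | inl e => inl (r e)
  | inr f1 => u1
  | inr f2 => inl v
  | inr h1 => u1
  | inr h2 => u2
  | inr k1 => u1
  | inr k2 => u2
  end.
End Splice.

(* At the new vertices u1 and u2 there are two return paths each (h1 and h2 k1
   at u1, k2 and k1 h2 at u2).  A return path at an old vertex that passes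
   through u1 or u2 can be lengthened by the loop h1 or k2 there, so it is not
   the only one; a return path avoiding them comes from a return path of E,
   and Condition (K) for E provides a second one. *)

From Stdlib Require List.
From mathcomp Require Import all_boot zify.
Set Implicit Arguments. Unset Strict Implicit.

Section ReturnPaths.
Variables (V E : Type) (r s : E -> V).

Lemma composable_cat a e t : composable r s (a ++ e :: t) <->
  composable r s (rcons a e) /\ composable r s (e :: t).
Proof.
case: a => [|y a] /=; first by split=> [|[]].
elim: a y => [|z a IH] y /=; first by split=> [[]|[[]]].
by split=> [[Hyz /IH []]|[[Hyz Ha] Ht]]; do ?split; last by apply/IH.
Qed.

Lemma return_path_at_rcons w q e : return_path_at r s w (rcons q e) <->
  [/\ composable r s (rcons q e), s (head e q) = w, r e = w
    & forall x, List.In x q -> r x <> w].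
Proof.
split=> [[[_ Hc] [Hs [q' [e' [/rcons_inj [<- <-] [He Hq]]]]]]|[Hc Hs He Hq]].
  by split=> //; case: q Hc Hs {Hq}.
split; first by split=> //; case: q {Hc Hs Hq}.
by split; [case: q Hc Hs {Hq} | exists q, e].
Qed.

Lemma return_path_insert_loop w a y t e l :
  return_path_at r s w (rcons (a ++ y :: t) e) -> s l = r y -> r l = r y ->
  return_path_at r s w (rcons (a ++ y :: l :: t) e).
Proof.
rewrite !return_path_at_rcons !rcons_cat !rcons_cons.
move=> [/composable_cat [Ha Hyt] Hs He Hq] Hsl Hrl; split=> //.
- apply/(composable_cat a y); split=> //.
  by case: (rcons t e) Hyt => [|z u] //= [Hyz Hu]; rewrite Hrl.
- by case: a Hs {Ha Hq}.
- have Hy : List.In y (a ++ y :: t) by apply: List.in_or_app; right; left.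
  move=> x Hx; case: (List.in_app_or _ _ _ Hx) => [Ha'|[<-|[<-|Ht]]].
  + by apply: Hq; apply: List.in_or_app; left.
  + exact: Hq Hy.
  + by rewrite Hrl; apply: Hq Hy.
  + by apply: Hq; apply: List.in_or_app; right; right.
Qed.

Lemma rcons_insert_neq a y l t e :
  rcons (a ++ y :: l :: t) e <> rcons (a ++ y :: t) e :> seq E.
Proof. by move/(congr1 size); rewrite !size_rcons !size_cat /=; lia. Qed.

Lemma two_return_paths_not_unique w : two_return_paths r s w ->
  ~ exists p, return_path_at r s w p /\ forall q, return_path_at r s w q -> q = p.
Proof.
move=> [p [q [Hp [Hq Hpq]]]] [p0 [_ Hunique]].
by apply: Hpq; rewrite (Hunique _ Hp) (Hunique _ Hq).
Qed.

End ReturnPaths.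

Section CuntzSplice.
Variables (V E : Type) (r s : E -> V) (v : V).
Local Notation R := (splice_r r v).
Local Notation S := (splice_s s v).

Definition is_new_vertex (u : V + bool) : bool := if u is inr _ then true else false.

Lemma splice_loop u : is_new_vertex u -> exists l, S l = u /\ R l = u.
Proof. by case: u => // [[]] _; [exists (inr k2) | exists (inr h1)]. Qed.

Lemma splice_two_return_paths b : two_return_paths R S (inr b).
Proof.
have Hrp q e : return_path_at R S (inr b) (rcons q e) <-> _ :=
  return_path_at_rcons R S (inr b) q e.
case: b Hrp => Hrp.
- exists [:: inr k2], [:: inr k1; inr h2].
  by split; [|split]; [apply/(Hrp [::]) | apply/(Hrp [:: inr k1]) |];
    do ?split => // ? [<-|].
- exists [:: inr h1], [:: inr h2; inr k1].
  by split; [|split]; [apply/(Hrp [::]) | apply/(Hrp [:: inr h2]) |];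
    do ?split => // ? [<-|].
Qed.

Lemma composable_map_inl p : composable R S (map inl p) <-> composable r s p.
Proof.
elim: p => [|x [|y p] IH] //=.
by split=> [[[Hxy] /IH]|[Hxy /IH]]; [|rewrite /= Hxy].
Qed.

Lemma return_path_map_inl x p :
  return_path_at R S (inl x) (map inl p) <-> return_path_at r s x p.
Proof.
case/lastP: p => [|q e]; first by split=> [[[]]|[[]]].
rewrite map_rcons !return_path_at_rcons -map_rcons.
have -> : head (inl e) (map inl q) = inl (head e q) :> E + splice_edge by case: q.
split=> [[/composable_map_inl Hc [Hs] [He] Hq]|[/composable_map_inl Hc Hs He Hq]];
  split=> //; try by congr inl.
- by move=> y Hy Hry; apply: (Hq (inl y)); [apply: List.in_map | rewrite /= Hry].
- by move=> _ /List.in_map_iff [y [<- Hy]] [/(Hq _ Hy)].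
Qed.

Lemma splice_edge_old y :
  ~~ is_new_vertex (S y) -> ~~ is_new_vertex (R y) -> exists e, y = inl e.
Proof. by case: y => [e|[]] //; exists e. Qed.

Lemma splice_old_path y l : composable R S (y :: l) -> ~~ is_new_vertex (S y) ->
  (forall z, List.In z (y :: l) -> ~~ is_new_vertex (R z)) ->
  exists p, y :: l = map inl p.
Proof.
elim: l y => [|z l IH] y Hc Hsy Hold.
  by have [e ->] := splice_edge_old Hsy (Hold y (or_introl erefl)); exists [:: e].
have [Hyz Hzl] := Hc.
have Hry := Hold y (or_introl erefl).
have [e ->] := splice_edge_old Hsy Hry.
have [p ->] : exists p, z :: l = map inl p.
  by apply: IH => // [|u Hu]; [rewrite -Hyz | apply: Hold; right].
by exists (e :: p).
Qed.

Lemma splice_return_path_visiting_new x q e y :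
  return_path_at R S (inl x) (rcons q e) -> List.In y q -> is_new_vertex (R y) ->
  exists2 p, return_path_at R S (inl x) p & p <> rcons q e.
Proof.
move=> Hp Hy Hnew; have [a [t Eq]] := List.in_split _ _ Hy.
have {}Eq : q = a ++ y :: t by []; subst q.
have [l [Hsl Hrl]] := splice_loop Hnew.
exists (rcons (a ++ y :: l :: t) e); last exact: rcons_insert_neq.
exact: return_path_insert_loop Hp Hsl Hrl.
Qed.

Lemma splice_return_path_avoiding_new x q e :
  return_path_at R S (inl x) (rcons q e) ->
  (forall z, List.In z q -> ~~ is_new_vertex (R z)) ->
  exists p, rcons q e = map inl p.
Proof.
move=> /return_path_at_rcons [Hc Hs He _] Hold.
case Eq: (rcons q e) Hc => [|y l] Hc; first by case: q Eq {Hold Hs}.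
apply: splice_old_path => //.
- by case: q Eq Hs {Hold} => [|z q] /= [<- _] ->.
- move=> z; rewrite -Eq -cats1 => Hz.
  by case: (List.in_app_or _ _ _ Hz) => [/Hold //|[<-|[]]]; rewrite He.
Qed.

Lemma splice_unique_return_path_old x p :
  return_path_at R S (inl x) p ->
  (forall q, return_path_at R S (inl x) q -> q = p) ->
  exists p', p = map inl p'.
Proof.
case/lastP: p => [[[]] //|q e] Hp Hunique.
case Hvisit: (List.existsb (fun y => is_new_vertex (R y)) q).
  have [y [Hy Hnew]] := proj1 (List.existsb_exists _ _) Hvisit.
  have [p' Hp' Hneq] := splice_return_path_visiting_new Hp Hy Hnew.
  by case: Hneq; apply: Hunique.
apply: (splice_return_path_avoiding_new Hp) => z Hz; apply/negP => Hnew.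
by rewrite (proj2 (List.existsb_exists _ _) (ex_intro _ z (conj Hz Hnew))) in Hvisit.
Qed.

End CuntzSplice.

Theorem proposition2p3 (V E : countType) (r s : E -> V) (v : V) :
  condition_K r s ->
  two_return_paths r s v ->
  condition_K (splice_r r v) (splice_s s v).
Proof.
(* The hypothesis on v only makes the splice meaningful in the paper;
   Condition (K) is inherited without it. *)
move=> HK _ [x|b] [p [Hp Hunique]]; last first.
  exact: (two_return_paths_not_unique (splice_two_return_paths r s v b))
    (ex_intro _ p (conj Hp Hunique)).
have [p' Ep] := splice_unique_return_path_old Hp Hunique; subst p.
apply: (HK x); exists p'; split; first exact/(return_path_map_inl r s v).
move=> q Hq; apply: (inj_map (@inl_inj _ _)).
by apply: Hunique; apply/(return_path_map_inl r s v).
Qed.
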